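(* Let $m\ge 1$ be an integer and $y=(y_0,\dots,y_{2m})\in\mathbb{R}^{2m+1}_+$. Then the function $$\mathcal{I}(x)=\mathcal{I}(y\,\|\,x*x)=\sum_{i=0}^{2m}\Big(y_i\log\frac{y_i}{(x*x)_i}-y_i+(x*x)_i\Big)$$ attains its minimum over $x\in\mathbb{R}^{m+1}_+$; i.e. the problem of minimizing $\mathcal{I}(y\|x*x)$ over $x\in\mathbb{R}^{m+1}_+$ admits a solution.
   Context: For $x=(x_0,\dots,x_m)\in\mathbb{R}^{m+1}$ set $x_k=0$ for $k<0$ and $k>m$, and define the autoconvolution $(x*x)_i=\sum_{j=0}^{i}x_{i-j}x_j$ for $i=0,\dots,2m$. For nonnegative vectors $u,v$ of equal length, the I-divergence is $\mathcal{I}(u\|v)=\sum_i\big(u_i\log\frac{u_i}{v_i}-u_i+v_i\big)$ if $u_i=0$ whenever $v_i=0$ (with the convention $0\log 0=0$, $0\log(0/0)=0$), and $\mathcal{I}(u\|v)=\infty$ if some $u_i>0$ has $v_i=0$. *)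

From HB Require Import structures.
From mathcomp Require Import all_boot all_order all_algebra.
From mathcomp Require Import all_classical all_reals.
From mathcomp Require Import ereal exp.
Set Implicit Arguments. Unset Strict Implicit. Unset Printing Implicit Defensive.
Import Order.TTheory GRing.Theory Num.Theory.
Local Open Scope ring_scope.

Definition ext (R : realType) (m : nat) (x : 'I_m.+1 -> R) (k : nat) : R :=
  if (k < m.+1)%N then x (inord k) else 0.

Definition autoconv (R : realType) (m : nat) (x : 'I_m.+1 -> R)
  : 'I_(2 * m).+1 -> R :=
  fun i => \sum_(j < (nat_of_ord i).+1) ext x (i - j) * ext x j.

(* one summand  u log(u/v) - u + v,  with 0 log 0 = 0 log(0/0) = 0 *)
Definition idiv_term (R : realType) (u v : R) : R :=
  (if u == 0 then 0 else u * ln (u / v)) - u + v.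

Definition idiv (R : realType) (n : nat) (u v : 'I_n -> R) : \bar R :=
  if [forall i, (v i == 0) ==> (u i == 0)]
  then (\sum_(i < n) idiv_term (u i) (v i))%:E
  else +oo%E.

From HB Require Import structures.
From mathcomp Require Import all_boot all_order all_algebra.
From mathcomp Require Import all_classical all_reals.
From mathcomp Require Import ereal exp.
From mathcomp Require Import topology normedtype sequences derive matrix_normedtype.
From mathcomp Require Import ring lra zify.
Set Implicit Arguments.
Unset Strict Implicit.
Unset Printing Implicit Defensive.

Import Order.TTheory GRing.Theory Num.Theory.
Import numFieldNormedType.Exports.
Local Open Scope ring_scope.
Local Open Scope classical_set_scope.

(* The objective is finite exactly at the admissible x, those with (x*x)_i = 0
   only where y_i = 0.  Each term is at least v/2 - y_i, and x_j^2 <= (x*x)_(2j),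
   so a sublevel set bounds x; a term with y_i > 0 blows up as (x*x)_i -> 0, so a
   sublevel set also keeps (x*x)_i away from 0 wherever y_i > 0, which is where
   the logarithm would be discontinuous.  Hence the sublevel set of the value at
   x = (1,...,1) lies in a compact set on which the objective is continuous, and
   a minimiser there is a global one. *)

Lemma ler_sum_term {R : numDomainType} {I : finType} (F : I -> R) i :
  (forall k, 0 <= F k) -> F i <= \sum_k F k.
Proof. by move=> F0; rewrite (bigD1 i) //= lerDl sumr_ge0. Qed.

Section compact_sublevel.
Variables (R : realType) (T : topologicalType).

Lemma compact_sublevel_min (D A : set T) (F : T -> R) (a : T) :
  compact A -> {within A, continuous F} -> A a ->
  A `<=` D -> (forall t, D t -> F t <= F a -> A t) ->
  exists2 c, D c & forall t, D t -> F c <= F t.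
Proof.
move=> cA cF Aa AD sublevel.
have [c /set_mem Ac minc] := compact_EVT_min (ex_intro _ a Aa) cA cF.
exists c => [|t Dt]; first exact: AD.
have [Fta|Fat] := leP (F t) (F a); first exact/minc/mem_set/sublevel.
by apply: le_trans (ltW Fat); exact/minc/mem_set.
Qed.

End compact_sublevel.

Section idiv_term.
Variable R : realType.
Implicit Types u v z C : R.

Lemma ln_le_subr1 z : 0 < z -> ln z <= z - 1.
Proof.
by move=> z0; have := @le_ln1Dx R (z - 1); rewrite addrCA subrr addr0; apply; lra.
Qed.

Lemma ln_le_half z : 0 < z -> ln z <= z / 2.
Proof.
move=> z0; have -> : z = 2 * (z / 2) by field.
rewrite lnM ?posrE ?divr_gt0 //.
have := @ln_le_subr1 2 ltac:(lra).
have := @ln_le_subr1 (z / 2) ltac:(rewrite divr_gt0 //).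
lra.
Qed.

Lemma idiv_term0l v : idiv_term 0 v = v.
Proof. by rewrite /idiv_term eqxx subr0 add0r. Qed.

Lemma idiv_termE u v : 0 < u -> 0 < v -> idiv_term u v = v - u - u * ln (v / u).
Proof.
move=> u0 v0; rewrite /idiv_term gt_eqF // -invf_div lnV ?posrE ?divr_gt0 //.
lra.
Qed.

Lemma idiv_term_ge0 u v : 0 <= u -> 0 <= v -> (v = 0 -> u = 0) -> 0 <= idiv_term u v.
Proof.
move=> u0 v0 vu; have [->|uN0] := eqVneq u 0; first by rewrite idiv_term0l.
have up : 0 < u by rewrite lt_def uN0.
have vp : 0 < v by rewrite lt_def v0 andbT; apply: contra_neq uN0 => /vu.
rewrite idiv_termE // subr_ge0.
have := ln_le_subr1 (divr_gt0 vp up) => /(ler_wpM2l (ltW up)).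
have -> : u * (v / u - 1) = v - u by field; rewrite gt_eqF.
lra.
Qed.

Lemma idiv_term_ge_half u v : 0 <= u -> 0 <= v -> (v = 0 -> u = 0) ->
  v / 2 - u <= idiv_term u v.
Proof.
move=> u0 v0 vu; have [->|uN0] := eqVneq u 0; first by rewrite idiv_term0l; lra.
have up : 0 < u by rewrite lt_def uN0.
have vp : 0 < v by rewrite lt_def v0 andbT; apply: contra_neq uN0 => /vu.
rewrite idiv_termE //.
have := ln_le_half (divr_gt0 vp up) => /(ler_wpM2l (ltW up)).
have -> : u * (v / u / 2) = v / 2 by field; rewrite gt_eqF.
lra.
Qed.

Lemma idiv_term_exp_le C u v : 0 < u -> 0 < v -> idiv_term u v <= C ->
  u * expR (- ((C + u) / u)) <= v.
Proof.
move=> up vp; rewrite idiv_termE // => le_C.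
have lnle : - ((C + u) / u) <= ln (v / u).
  rewrite lerNl ler_pdivlMr // mulrC; lra.
rewrite mulrC -ler_pdivlMr // -[v / u]lnK ?posrE ?divr_gt0 //.
by rewrite ler_expR.
Qed.

Lemma idiv_term_continuous u v : 0 <= u -> (0 < u -> 0 < v) ->
  {for v, continuous (idiv_term u)}.
Proof.
rewrite le_eqVlt => /predU1P[<- _|up /(_ up) vp].
  by rewrite (_ : idiv_term 0 = id); [exact: cvg_id | apply/funext/idiv_term0l].
rewrite /idiv_term gt_eqF //.
have ln_div : {for v, continuous (fun t : R => ln (u / t))}.
  apply: continuous_comp; last by apply: continuous_ln; rewrite divr_gt0.
  apply: continuousM; first exact: cst_continuous.
  by apply: continuousV; [rewrite gt_eqF | exact: cvg_id].
apply: continuousD; last exact: cvg_id.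
apply: continuousB; last exact: cst_continuous.
by apply: continuousM; first exact: cst_continuous.
Qed.

End idiv_term.

Section autoconv.
Variables (R : realType) (m : nat).
Implicit Types x : 'I_m.+1 -> R.

Lemma ext_ge0 x k : (forall j, 0 <= x j) -> 0 <= ext x k.
Proof. by move=> x0; rewrite /ext; case: ifP. Qed.

Lemma autoconv_ge0 x i : (forall j, 0 <= x j) -> 0 <= autoconv x i.
Proof. by move=> x0; apply: sumr_ge0 => k _; rewrite mulr_ge0 ?ext_ge0. Qed.

Lemma ext_ord x (j : 'I_m.+1) : ext x j = x j.
Proof. by rewrite /ext ltn_ord inord_val. Qed.

Lemma sqr_le_autoconv x (j : 'I_m.+1) : (forall j, 0 <= x j) ->
  x j ^+ 2 <= autoconv x (inord (2 * j)).
Proof.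
move=> x0; rewrite /autoconv inordK; last by have := ltn_ord j; lia.
have jlt : (j < (2 * j).+1)%N by lia.
rewrite (bigD1 (Ordinal jlt)) //= (_ : (2 * j - j)%N = j) ?ext_ord; last by lia.
by rewrite expr2 lerDl sumr_ge0 // => k _; rewrite mulr_ge0 ?ext_ge0.
Qed.

Lemma autoconv1_ge1 i : 1 <= autoconv (fun _ : 'I_m.+1 => 1 : R) i.
Proof.
have klt : (minn i m < i.+1)%N by lia.
rewrite /autoconv (bigD1 (Ordinal klt)) //= -[X in X <= _]addr0 lerD //; last first.
  by apply: sumr_ge0 => k _; rewrite mulr_ge0 ?ext_ge0.
by have := ltn_ord i; rewrite /ext => ilt; rewrite !ifT ?mulr1 //; lia.
Qed.

Lemma autoconv_continuous i : continuous (fun r : 'rV[R]_m.+1 => autoconv (r ord0) i).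
Proof.
have ext_cont l : continuous (fun s : 'rV[R]_m.+1 => ext (s ord0) l).
  by rewrite /ext; case: (l < m.+1)%N; [exact: coord_continuous | exact: cst_continuous].
apply: continuous_big => [|k _ r]; first exact: add_continuous.
exact: continuousM (ext_cont _ r) (ext_cont _ r).
Qed.

End autoconv.

Section idiv_sum.
Variables (R : realType) (n : nat).
Implicit Types u v : 'I_n -> R.

Definition idiv_sum u v : R := \sum_i idiv_term (u i) (v i).

Lemma idivE u v : (forall i, v i = 0 -> u i = 0) -> idiv u v = (idiv_sum u v)%:E.
Proof.
move=> vu; rewrite /idiv ifT //.
by apply/forallP => i; apply/implyP => /eqP/vu ->.
Qed.

Lemma idiv_eq_infty u v : ~ (forall i, v i = 0 -> u i = 0) -> idiv u v = +oo%E.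
Proof.
move=> not_vu; rewrite /idiv ifF //; apply/negP => /forallP vu; apply: not_vu => i /eqP.
by move/(implyP (vu i))/eqP.
Qed.

Lemma idiv_term_le_sum u v i : (forall i, 0 <= u i) -> (forall i, 0 <= v i) ->
  (forall i, v i = 0 -> u i = 0) -> idiv_term (u i) (v i) <= idiv_sum u v.
Proof.
move=> u0 v0 vu; apply: (ler_sum_term (F := fun k => idiv_term (u k) (v k))) => k.
exact: idiv_term_ge0 (u0 k) (v0 k) (vu k).
Qed.

Lemma idiv_sum_continuous (T : topologicalType) u (V : T -> 'I_n -> R) t :
  (forall i, 0 <= u i) -> (forall i, {for t, continuous (V^~ i)}) ->
  (forall i, 0 < u i -> 0 < V t i) -> {for t, continuous (fun s => idiv_sum u (V s))}.
Proof.
move=> u0 Vc Vt; apply: cvg_big => [|i _]; first exact: add_continuous.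
exact: cvg_comp (Vc i) (idiv_term_continuous (u0 i) (Vt i)).
Qed.

End idiv_sum.

Section autoconv_fit.
Variables (R : realType) (m : nat) (y : 'I_(2 * m).+1 -> R).
Hypothesis y0 : forall i, 0 <= y i.

Definition admissible (x : 'I_m.+1 -> R) :=
  (forall j, 0 <= x j) /\ (forall i, autoconv x i = 0 -> y i = 0).

Let fit x := idiv_sum y (autoconv x).

Lemma admissible_coord_le x C j : admissible x -> fit x <= C ->
  x j <= 1 + 2 * (C + \sum_i y i).
Proof.
move=> [x0 xy] le_C; pose i : 'I_(2 * m).+1 := inord (2 * j).
have sqr_le := sqr_le_autoconv j x0.
have half_le := idiv_term_ge_half (y0 i) (autoconv_ge0 i x0) (xy i).
have term_le := idiv_term_le_sum i y0 (fun i => autoconv_ge0 i x0) xy.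
have y_le := ler_sum_term i y0.
have : x j <= 1 + x j ^+ 2 by rewrite -subr_ge0; nra.
rewrite /fit in le_C; rewrite -/i in sqr_le; lra.
Qed.

Lemma admissible_autoconv_ge x C i : admissible x -> fit x <= C ->
  y i * expR (- ((C + y i) / y i)) <= autoconv x i.
Proof.
move=> [x0 xy] le_C; have [->|yN0] := eqVneq (y i) 0.
  by rewrite mul0r autoconv_ge0.
have yp : 0 < y i by rewrite lt_def yN0 y0.
have vp : 0 < autoconv x i.
  by rewrite lt_def autoconv_ge0 // andbT; apply: contra_neq yN0 => /xy.
apply: idiv_term_exp_le => //; apply: le_trans le_C.
exact: idiv_term_le_sum i y0 (fun i => autoconv_ge0 i x0) xy.
Qed.

Definition sublevel_box C : set 'rV[R]_m.+1 :=
  [set r | forall j, `[0, 1 + 2 * (C + \sum_i y i)]%classic (r ord0 j)] `&`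
  \bigcap_i [set r | y i * expR (- ((C + y i) / y i)) <= autoconv (r ord0) i].

Lemma sublevel_box_admissible C (r : 'rV[R]_m.+1) :
  sublevel_box C r -> admissible (r ord0).
Proof.
move=> [box conv]; split=> [j|i eq0]; first by have /andP[] := box j.
apply/eqP; rewrite eq_le y0 andbT leNgt; apply/negP => yp.
have := conv i I; rewrite /= eq0; have := mulr_gt0 yp (expR_gt0 (- ((C + y i) / y i))).
lra.
Qed.

Lemma admissible_sublevel_box C (r : 'rV[R]_m.+1) :
  admissible (r ord0) -> fit (r ord0) <= C -> sublevel_box C r.
Proof.
move=> adm le_C; split=> [j|i _] /=; last exact: admissible_autoconv_ge adm le_C.
by rewrite in_itv /= (admissible_coord_le _ adm le_C) andbT; case: adm.
Qed.

Lemma compact_sublevel_box C : compact (sublevel_box C).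
Proof.
rewrite /sublevel_box.
apply: compact_closedI; first exact: rV_compact (fun=> @segment_compact _ _ _).
apply: closed_bigI => i _.
apply: (preimage_closed (D := [set t | _ <= t])); last exact: closed_ge.
by move=> r _; exact: autoconv_continuous.
Qed.

Lemma fit_continuous_sublevel_box C :
  {within sublevel_box C, continuous (fun r => fit (r ord0))}.
Proof.
apply: continuous_in_subspaceT => r /set_mem [_ conv].
apply: idiv_sum_continuous => // i; first exact: autoconv_continuous.
by move=> yp; apply: lt_le_trans (conv i I); rewrite mulr_gt0 ?expR_gt0.
Qed.

Lemma admissible_fit_min :
  exists2 x, admissible x & forall x', admissible x' -> fit x <= fit x'.
Proof.
have rowK x : (\row_j x j) ord0 = x by apply/funext => j; rewrite mxE.
pose one := \row_(j < m.+1) (1 : R).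
have adm_one : admissible (one ord0).
  split=> [j|i]; first by rewrite mxE.
  by rewrite rowK => eq0; have := autoconv1_ge1 R i; rewrite eq0; lra.
pose D := [set r : 'rV[R]_m.+1 | admissible (r ord0)].
have [c Dc c_min] := compact_sublevel_min (D := D)
  (@compact_sublevel_box (fit (one ord0))) (@fit_continuous_sublevel_box _)
  (admissible_sublevel_box adm_one (lexx _)) (@sublevel_box_admissible _)
  (@admissible_sublevel_box _).
by exists (c ord0) => // x' adm'; have := c_min (\row_j x' j); rewrite /D /= rowK; exact.
Qed.

End autoconv_fit.

Theorem proposition1 (R : realType) (m : nat) (hm : (1 <= m)%N)
  (y : 'I_(2 * m).+1 -> R) (hy : forall i, 0 <= y i) :
  exists2 x : 'I_m.+1 -> R, (forall j, 0 <= x j) &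
    forall x' : 'I_m.+1 -> R, (forall j, 0 <= x' j) ->
      (idiv y (autoconv x) <= idiv y (autoconv x'))%E.
Proof.
have [x [x0 xy] x_min] := admissible_fit_min hy.
exists x => // x' x'0; rewrite idivE //.
have [x'y | not_x'y] := pselect (forall i, autoconv x' i = 0 -> y i = 0).
  by rewrite idivE // lee_fin; apply: x_min.
by rewrite idiv_eq_infty // leey.
Qed.
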